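(* Let $I$ be a countable set with $|I|\ge 2$, let $\mathfrak{M}_i=(S_i,\mathcal{L}_i)$ be partial linear spaces for $i\in I$, let $\mathfrak{M}=\bigotimes_{i\in I}\mathfrak{M}_i$ with point set $S=\prod_{i\in I}S_i$, and for each $i$ let $\mathcal{H}_i^{\mathrm{all}}$ denote the family consisting of all hyperplanes of $\mathfrak{M}_i$ together with the set $S_i$. For $\mathcal{H}\subseteq S$ the following are equivalent: (1) $\mathcal{H}$ is a hyperplane of $\mathfrak{M}$; (2) for all $a\in S$ and $i\in I$ we have $\mathcal{H}^{[a]}_i\in\mathcal{H}_i^{\mathrm{all}}$, and there exist $a\in S$, $i\in I$ with $\mathcal{H}^{[a]}_i\neq S_i$.
   Context: A partial linear space is a pair $(S,\mathcal{L})$ with $\mathcal{L}$ a family of subsets of $S$ (lines) such that every line has at least two points, every point lies on a line, and two distinct lines share at most one point. A subspace is a set $X$ such that any line meeting $X$ in at least two points is contained in $X$; a hyperplane is a proper subspace meeting every line. Segre product: for $a\in S=\prod_{i\in I}S_i$, $i\in I$ and $x\in S_i$, $a[i/x]$ denotes $a$ with its $i$-th coordinate replaced by $x$, and for $A\subseteq S_i$, $a[i/A]=\{a[i/x]:x\in A\}$. The Segre product $\bigotimes_{i\in I}\mathfrak{M}_i$ has point set $S$ and lines $a[i/l]$ for $a\in S$, $i\in I$, $l\in\mathcal{L}_i$. For $\mathcal{H}\subseteq S$, $a\in S$, $i\in I$: $\mathcal{H}^{[a]}_i=\{x\in S_i: a[i/x]\in\mathcal{H}\}$. *)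

From Stdlib Require Import ClassicalEpsilon.

Definition set (T : Type) := T -> Prop.

Definition partial_linear_space {T : Type} (L : set (set T)) : Prop :=
  (forall l, L l -> exists x y, x <> y /\ l x /\ l y) /\
  (forall p : T, exists l, L l /\ l p) /\
  (forall l1 l2, L l1 -> L l2 -> l1 <> l2 ->
     forall x y, l1 x -> l2 x -> l1 y -> l2 y -> x = y).

Definition subspace {T : Type} (L : set (set T)) (X : set T) : Prop :=
  forall l, L l -> (exists x y, x <> y /\ l x /\ l y /\ X x /\ X y) ->
    forall z, l z -> X z.

Definition hyperplane {T : Type} (L : set (set T)) (X : set T) : Prop :=
  subspace L X /\ (exists p, ~ X p) /\ (forall l, L l -> exists p, l p /\ X p).

Definition upd {I : Type} {S : I -> Type} (a : forall j, S j) (i : I) (x : S i)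
  : forall j, S j :=
  fun j => match excluded_middle_informative (i = j) with
           | left e => eq_rect i S x j e
           | right _ => a j
           end.

Definition upd_set {I : Type} {S : I -> Type} (a : forall j, S j) (i : I)
  (A : set (S i)) : set (forall j, S j) :=
  fun b => exists x, A x /\ b = upd a i x.

Definition segre_lines {I : Type} {S : I -> Type} (L : forall i, set (set (S i)))
  : set (set (forall j, S j)) :=
  fun l' => exists (a : forall j, S j) (i : I) (l : set (S i)),
    L i l /\ l' = upd_set a i l.

Definition slice {I : Type} {S : I -> Type} (H : set (forall j, S j))
  (a : forall j, S j) (i : I) : set (S i) :=
  fun x => H (upd a i x).

Definition H_all {T : Type} (L : set (set T)) (X : set T) : Prop :=
  hyperplane L X \/ (forall x, X x).

(* A line of the Segre product lies in a single coordinate direction, so it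
   meets H exactly as the corresponding line of M_i meets the slice of H
   through its base point.  Hence H is a subspace meeting every line iff every
   slice is, i.e. iff every slice is a hyperplane or the whole of S_i; and H is
   proper iff some slice is, since every point a lies on the slice through a
   itself. *)
From Stdlib Require Import ClassicalEpsilon ProofIrrelevance FunctionalExtensionality Classical.

Definition meets_all_lines {T : Type} (L : set (set T)) (X : set T) : Prop :=
  forall l, L l -> exists p, l p /\ X p.

Section Update.

Context {I : Type} {S : I -> Type}.

Lemma upd_same (a : forall j, S j) (i : I) (x : S i) : upd a i x i = x.
Proof.
  unfold upd. destruct (excluded_middle_informative (i = i)) as [e|n].
  - rewrite (proof_irrelevance _ e eq_refl). reflexivity.
  - exfalso; apply n; reflexivity.
Qed.

Lemma upd_id (a : forall j, S j) (i : I) : upd a i (a i) = a.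
Proof.
  apply functional_extensionality_dep; intro j. unfold upd.
  destruct (excluded_middle_informative (i = j)) as [e|n]; [destruct e|]; reflexivity.
Qed.

Lemma upd_inj (a : forall j, S j) (i : I) (x y : S i) : upd a i x = upd a i y -> x = y.
Proof. intro E. rewrite <- (upd_same a i x), <- (upd_same a i y), E. reflexivity. Qed.

End Update.

Section SegreSlices.

Context {I : Type} {S : I -> Type} (L : forall i, set (set (S i))).
Variable H : set (forall j, S j).

Lemma segre_subspace_iff :
  subspace (segre_lines L) H <-> forall a i, subspace (L i) (slice H a i).
Proof.
  split.
  - intros Hsub a i l Hl [x [y [Hxy [lx [ly [Hx Hy]]]]]] z lz.
    apply (Hsub (upd_set a i l)); [exists a, i, l; auto | | exists z; auto].
    exists (upd a i x), (upd a i y). repeat split; auto.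
    + intro E. exact (Hxy (upd_inj a i x y E)).
    + exists x; auto.
    + exists y; auto.
  - intros Hs l' [b [i [l [Hl ->]]]] [x' [y' [Hxy [[x [lx ->]] [[y [ly ->]] [Hx Hy]]]]]]
      z [w [lw ->]].
    apply (Hs b i l Hl); auto.
    exists x, y. repeat split; auto.
    intros ->. apply Hxy; reflexivity.
Qed.

Lemma segre_meets_all_lines_iff :
  meets_all_lines (segre_lines L) H <-> forall a i, meets_all_lines (L i) (slice H a i).
Proof.
  split.
  - intros Hm a i l Hl.
    destruct (Hm (upd_set a i l)) as [b [[x [lx ->]] Hb]]; [exists a, i, l; auto|].
    exists x; auto.
  - intros Hm l' [b [i [l [Hl ->]]]].
    destruct (Hm b i l Hl) as [x [lx Hx]].
    exists (upd b i x). split; [exists x|]; auto.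
Qed.

Lemma proper_iff_proper_slice (i0 : I) :
  (exists p, ~ H p) <-> exists a i, ~ (forall x, slice H a i x).
Proof.
  split.
  - intros [p Hp]. exists p, i0. intro Hfull.
    apply Hp. specialize (Hfull (p i0)). unfold slice in Hfull.
    rewrite upd_id in Hfull. exact Hfull.
  - intros [a [i Hn]]. apply not_all_ex_not in Hn. destruct Hn as [x Hx].
    exists (upd a i x). exact Hx.
Qed.

End SegreSlices.

Lemma H_all_iff {T : Type} (L : set (set T)) (X : set T) :
  (forall l, L l -> exists p, l p) ->
  H_all L X <-> subspace L X /\ meets_all_lines L X.
Proof.
  intro Hne. split.
  - intros [[Hs [_ Hm]] | Hfull]; [auto|].
    split.
    + intros l _ _ z _. apply Hfull.
    + intros l Hl. destruct (Hne l Hl) as [p lp]. exists p; auto.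
  - intros [Hs Hm]. destruct (classic (forall x, X x)) as [Hfull | Hn]; [right; exact Hfull|].
    left. split; [exact Hs | split; [apply not_all_ex_not; exact Hn | exact Hm]].
Qed.

Lemma partial_linear_space_lines_nonempty {T : Type} (L : set (set T)) :
  partial_linear_space L -> forall l, L l -> exists p, l p.
Proof. intros [Hline _] l Hl. destruct (Hline l Hl) as [x [_ [_ [lx _]]]]. exists x; exact lx. Qed.

Theorem theorem3p1 (I : Type) (S : I -> Type) (L : forall i, set (set (S i)))
  (HIcount : exists f : I -> nat, forall i j, f i = f j -> i = j)
  (HI2 : exists i j : I, i <> j)
  (Hpls : forall i, partial_linear_space (L i))
  (H : set (forall j, S j)) :
  hyperplane (segre_lines L) H <->
  ((forall (a : forall j, S j) (i : I), H_all (L i) (slice H a i)) /\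
   exists (a : forall j, S j) (i : I), ~ (forall x, slice H a i x)).
Proof.
  destruct HI2 as [i0 _].
  assert (Hslices : (forall a i, H_all (L i) (slice H a i)) <->
                    subspace (segre_lines L) H /\ meets_all_lines (segre_lines L) H).
  { rewrite segre_subspace_iff, segre_meets_all_lines_iff. split.
    - intro Hall. split; intros a i;
        apply (H_all_iff (L i) _ (partial_linear_space_lines_nonempty _ (Hpls i))), Hall.
    - intros [Hs Hm] a i.
      apply (H_all_iff (L i) _ (partial_linear_space_lines_nonempty _ (Hpls i))); auto. }
  unfold hyperplane. rewrite Hslices, <- (proper_iff_proper_slice H i0).
  unfold meets_all_lines. tauto.
Qed.
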